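(* Let $L$ be a pentagonal linkage with positive charges $q_1,\dots,q_5>0$ at the vertices and effective Coulomb potential $E=\frac{q_2q_5}{b_1}+\frac{q_1q_3}{b_2}+\frac{q_2q_4}{b_3}+\frac{q_3q_5}{b_4}+\frac{q_1q_4}{b_5}$. Let $X_k=\{P\in\overline{M^C}(L): b_4=k\}$ be a slice, parameterized on its relative interior by $x_2$. Then $\frac{d^2}{dx_2^2}\big(E|_{X_k}\big)>0$ on the relative interior of $X_k$.
   Context: A pentagonal linkage $L$ is given by side lengths $a_1,\dots,a_5>0$; $M(L)$ is the set of planar 5-gons $(A_1,\dots,A_5)$ with $|A_iA_{i+1}|=a_i$ (indices mod 5) modulo all isometries of $\mathbb{R}^2$; $M^C(L)$ is the set of strictly convex configurations (convex pentagon $A_1\dots A_5$ in this cyclic order, no angle equal to $\pi$) and $\overline{M^C}(L)$ its closure. $b_i=|A_{i-1}A_{i+1}|$, $x_i=b_i^2$ (indices mod 5). *)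

From Stdlib Require Import Reals Lra Arith.
From Coquelicot Require Import Coquelicot.
Open Scope R_scope.

(* A planar 5-gon is given by A : nat -> R*R ; the vertex A_i of the paper
   (indices mod 5, paper numbering 1..5) is  pt A i := A (i mod 5),
   so A_5 = A_0 = A 0. *)
Definition pt (A : nat -> R * R) (i : nat) : R * R := A (i mod 5)%nat.

Definition dist2 (P Q : R * R) : R :=
  Rsqr (fst P - fst Q) + Rsqr (snd P - snd Q).
Definition dist (P Q : R * R) : R := sqrt (dist2 P Q).

Definition cross (P Q S : R * R) : R :=
  (fst Q - fst P) * (snd S - snd P) - (snd Q - snd P) * (fst S - fst P).

Definition has_sides (a : nat -> R) (A : nat -> R * R) : Prop :=
  forall i, (1 <= i <= 5)%nat -> dist (pt A i) (pt A (S i)) = a i.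

Definition strictly_convex (A : nat -> R * R) : Prop :=
  exists s : R, (s = 1 \/ s = -1) /\
    forall i j : nat, (1 <= i <= 5)%nat -> (1 <= j <= 5)%nat ->
      (j mod 5 <> i mod 5)%nat -> (j mod 5 <> (S i) mod 5)%nat ->
      0 < s * cross (pt A i) (pt A (S i)) (pt A j).

(* configurations of M^C(L) (representatives) *)
Definition in_MC (a : nat -> R) (A : nat -> R * R) : Prop :=
  has_sides a A /\ strictly_convex A.

(* Since M^C(L) is
   isometry invariant and the quotient map by isometries is open, this is
   the preimage of the closure of M^C(L) in M(L). *)
Definition in_closure_MC (a : nat -> R) (A : nat -> R * R) : Prop :=
  has_sides a A /\
  forall eps, 0 < eps ->
    exists B, in_MC a B /\
      forall i, (1 <= i <= 5)%nat -> dist (pt A i) (pt B i) < eps.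

(* diagonals b_i = |A_{i-1} A_{i+1}|, x_i = b_i^2 *)
Definition b (A : nat -> R * R) (i : nat) : R := dist (pt A (i + 4)) (pt A (S i)).
Definition x (A : nat -> R * R) (i : nat) : R := Rsqr (b A i).

Definition energy (q : nat -> R) (A : nat -> R * R) : R :=
  q 2%nat * q 5%nat / b A 1 + q 1%nat * q 3%nat / b A 2
  + q 2%nat * q 4%nat / b A 3 + q 3%nat * q 5%nat / b A 4
  + q 1%nat * q 4%nat / b A 5.

Definition in_slice (a : nat -> R) (k : R) (A : nat -> R * R) : Prop :=
  in_closure_MC a A /\ b A 4 = k.

Definition interior_pt (I : R -> Prop) (t : R) : Prop :=
  exists d, 0 < d /\ forall u, Rabs (u - t) < d -> I u.

(* Fix b_4 = k > 0 and place A_3 at the origin.  The side lengths determine the dot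
   products and the squared cross products of A_5, A_1, A_2, A_4 as functions of x = x_2,
   and convexity, which survives in the closure as a sign condition on cross products,
   fixes the signs.  Hence x_1, x_3, x_5 are explicit functions of x, and each is concave:
   x_1 = a_2^2 + k^2 - 2 A_5.A_2 where A_5.A_2 is convex in x (its second derivative is a
   sum of squares), x_5 is affine plus a nonnegative multiple of the square root of a
   concave quadratic, and x_3 is a concave nonincreasing function of A_5.A_2.  So every
   term c / sqrt x_i of the energy is convex in x, and q_1 q_3 / sqrt x_2 is strictly
   convex.  On the relative interior of the slice the configuration is nondegenerate,
   since the squared cross products are concave quadratics that are nonnegative on a
   neighbourhood; the boundary cases x_2 = 0 and b_4 = 0 have forced shape and constant
   energy. *)

From Stdlib Require Import Reals Lra Psatz IndefiniteDescription.
From Coquelicot Require Import Coquelicot.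
Open Scope R_scope.

Lemma locally_Rabs (P : R -> Prop) (t : R) :
  locally t P <-> exists d, 0 < d /\ forall u, Rabs (u - t) < d -> P u.
Proof.
  split.
  - intros [e He]. exists e. split; [apply cond_pos | exact He].
  - intros [d [Hd H]]. exists (mkposreal d Hd). exact H.
Qed.

Definition is_derive2_near (f f1 f2 : R -> R) (t : R) : Prop :=
  locally t (fun u => is_derive f u (f1 u) /\ is_derive f1 u (f2 u)).

Lemma is_derive_eq (f : R -> R) (u l l' : R) :
  is_derive f u l -> l = l' -> is_derive f u l'.
Proof. intros H <-. exact H. Qed.

Lemma is_derive_Rmult (f g : R -> R) (u df dg : R) :
  is_derive f u df -> is_derive g u dg ->
  is_derive (fun v => f v * g v) u (df * g u + f u * dg).
Proof. intros Hf Hg. exact (is_derive_mult f g u df dg Hf Hg Rmult_comm). Qed.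

Section SecondDerivative.

Variable t : R.

Lemma is_derive2_near_Derive_n (f f1 f2 : R -> R) :
  is_derive2_near f f1 f2 t ->
  locally t (ex_derive f) /\ ex_derive_n f 2 t /\ Derive_n f 2 t = f2 t.
Proof.
  intros H.
  assert (HD1 : locally t (fun u => Derive_n f 1 u = f1 u)).
  { apply (filter_imp _ _ (fun u Hu => is_derive_unique _ _ _ (proj1 Hu)) H). }
  split; [|split].
  - apply (filter_imp _ _ (fun u Hu => ex_intro _ (f1 u) (proj1 Hu)) H).
  - apply (ex_derive_ext_loc f1).
    + apply (filter_imp _ _ (fun u Hu => eq_sym Hu) HD1).
    + exists (f2 t). apply (locally_singleton _ _ H).
  - change (Derive (Derive_n f 1) t = f2 t).
    rewrite (Derive_ext_loc _ f1 t HD1).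
    apply is_derive_unique, (locally_singleton _ _ H).
Qed.

Lemma is_derive2_near_ext (f g f1 f2 : R -> R) :
  locally t (fun u => f u = g u) ->
  is_derive2_near f f1 f2 t -> is_derive2_near g f1 f2 t.
Proof.
  intros Hfg H. apply locally_locally in Hfg.
  unfold is_derive2_near in *. generalize (filter_and _ _ Hfg H). apply filter_imp.
  intros u [Hu [H1 H2]]. split; [apply (is_derive_ext_loc f) |]; assumption.
Qed.

Lemma is_derive2_near_const (c : R) :
  is_derive2_near (fun _ => c) (fun _ => 0) (fun _ => 0) t.
Proof.
  unfold is_derive2_near. apply filter_forall. intros u.
  split; exact (is_derive_const _ u).
Qed.

Lemma is_derive2_near_id : is_derive2_near (fun u => u) (fun _ => 1) (fun _ => 0) t.
Proof.
  unfold is_derive2_near. apply filter_forall. intros u.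
  split; [exact (is_derive_id u) | exact (is_derive_const _ u)].
Qed.

Lemma is_derive2_near_plus (f f1 f2 g g1 g2 : R -> R) :
  is_derive2_near f f1 f2 t -> is_derive2_near g g1 g2 t ->
  is_derive2_near (fun u => f u + g u) (fun u => f1 u + g1 u) (fun u => f2 u + g2 u) t.
Proof.
  unfold is_derive2_near. intros Hf Hg. generalize (filter_and _ _ Hf Hg). apply filter_imp.
  intros u [[F1 F2] [G1 G2]].
  split; [exact (is_derive_plus _ _ u _ _ F1 G1) | exact (is_derive_plus _ _ u _ _ F2 G2)].
Qed.

Lemma is_derive2_near_scal (c : R) (f f1 f2 : R -> R) :
  is_derive2_near f f1 f2 t ->
  is_derive2_near (fun u => c * f u) (fun u => c * f1 u) (fun u => c * f2 u) t.
Proof.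
  unfold is_derive2_near. apply filter_imp. intros u [F1 F2].
  split; apply is_derive_scal; assumption.
Qed.

Lemma is_derive2_near_mult (f f1 f2 g g1 g2 : R -> R) :
  is_derive2_near f f1 f2 t -> is_derive2_near g g1 g2 t ->
  is_derive2_near (fun u => f u * g u) (fun u => f1 u * g u + f u * g1 u)
    (fun u => f2 u * g u + 2 * (f1 u * g1 u) + f u * g2 u) t.
Proof.
  unfold is_derive2_near. intros Hf Hg. generalize (filter_and _ _ Hf Hg). apply filter_imp.
  intros u [[F1 F2] [G1 G2]]. split; [apply is_derive_Rmult; assumption|].
  eapply is_derive_eq.
  - exact (is_derive_plus _ _ u _ _ (is_derive_Rmult _ _ u _ _ F2 G1)
                                   (is_derive_Rmult _ _ u _ _ F1 G2)).
  - simpl. unfold plus; simpl. ring.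
Qed.

Lemma is_derive2_near_comp (phi phi1 phi2 : R -> R) (Dom : R -> Prop)
    (f f1 f2 : R -> R) :
  (forall y, Dom y -> is_derive phi y (phi1 y) /\ is_derive phi1 y (phi2 y)) ->
  is_derive2_near f f1 f2 t -> locally t (fun u => Dom (f u)) ->
  is_derive2_near (fun u => phi (f u)) (fun u => phi1 (f u) * f1 u)
    (fun u => phi2 (f u) * (f1 u * f1 u) + phi1 (f u) * f2 u) t.
Proof.
  unfold is_derive2_near. intros Hphi Hf HDom. generalize (filter_and _ _ Hf HDom).
  apply filter_imp. intros u [[F1 F2] Hu]. destruct (Hphi _ Hu) as [P1 P2].
  assert (C2 := is_derive_comp phi1 f u _ _ P2 F1).
  split.
  - eapply is_derive_eq; [exact (is_derive_comp phi f u _ _ P1 F1)|].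
    simpl. unfold scal; simpl. unfold mult; simpl. ring.
  - eapply is_derive_eq; [exact (is_derive_Rmult _ _ u _ _ C2 F2)|].
    simpl. unfold scal; simpl. unfold mult; simpl. ring.
Qed.

End SecondDerivative.

Lemma locally_gt0 (t : R) : 0 < t -> locally t (fun u => 0 < u).
Proof.
  intros Ht. apply locally_Rabs. exists t. split; [exact Ht|].
  intros u Hu. apply Rabs_def2 in Hu. lra.
Qed.

Lemma is_derive2_sqrt (y : R) : 0 < y ->
  is_derive sqrt y (/ (2 * sqrt y)) /\
  is_derive (fun z => / (2 * sqrt z)) y (- / (4 * y * sqrt y)).
Proof.
  intros Hy. assert (Hs := sqrt_lt_R0 y Hy). assert (Hss := sqrt_sqrt y (Rlt_le _ _ Hy)).
  split.
  - auto_derive; [exact Hy|]. field. lra.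
  - auto_derive; [split; [exact Hy | lra]|]. remember (sqrt y) as s. rewrite <- Hss. field. lra.
Qed.

Lemma is_derive2_inv_sqrt (y : R) : 0 < y ->
  is_derive (fun z => / sqrt z) y (- / (2 * y * sqrt y)) /\
  is_derive (fun z => - / (2 * z * sqrt z)) y (3 / (4 * y * y * sqrt y)).
Proof.
  intros Hy. assert (Hs := sqrt_lt_R0 y Hy). assert (Hss := sqrt_sqrt y (Rlt_le _ _ Hy)).
  split.
  - auto_derive; [split; [exact Hy | lra]|]. remember (sqrt y) as s. rewrite <- Hss. field. lra.
  - auto_derive; [repeat split; try lra; nra|]. remember (sqrt y) as s. rewrite <- Hss. field. lra.
Qed.

Definition convex_at (f : R -> R) (t : R) : Prop :=
  exists f1 f2, is_derive2_near f f1 f2 t /\ 0 <= f2 t.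
Definition strictly_convex_at (f : R -> R) (t : R) : Prop :=
  exists f1 f2, is_derive2_near f f1 f2 t /\ 0 < f2 t.
Definition concave_at (f : R -> R) (t : R) : Prop :=
  exists f1 f2, is_derive2_near f f1 f2 t /\ f2 t <= 0.

Section Convexity.

Variable t : R.

Lemma concave_at_ext (f g : R -> R) :
  locally t (fun u => f u = g u) -> concave_at f t -> concave_at g t.
Proof.
  intros Hfg [f1 [f2 [Hf H2]]]. exists f1, f2. split; [|exact H2].
  exact (is_derive2_near_ext t f g f1 f2 Hfg Hf).
Qed.

Lemma strictly_convex_at_ext (f g : R -> R) :
  locally t (fun u => f u = g u) -> strictly_convex_at f t -> strictly_convex_at g t.
Proof.
  intros Hfg [f1 [f2 [Hf H2]]]. exists f1, f2. split; [|exact H2].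
  exact (is_derive2_near_ext t f g f1 f2 Hfg Hf).
Qed.

Lemma convex_at_const (c : R) : convex_at (fun _ => c) t.
Proof. exists (fun _ => 0), (fun _ => 0). split; [apply is_derive2_near_const | lra]. Qed.

Lemma strictly_convex_at_plus (f g : R -> R) :
  strictly_convex_at f t -> convex_at g t -> strictly_convex_at (fun u => f u + g u) t.
Proof.
  intros [f1 [f2 [Hf F]]] [g1 [g2 [Hg G]]].
  exists (fun u => f1 u + g1 u), (fun u => f2 u + g2 u).
  split; [apply is_derive2_near_plus; assumption | lra].
Qed.

Lemma convex_at_plus_strictly (f g : R -> R) :
  convex_at f t -> strictly_convex_at g t -> strictly_convex_at (fun u => f u + g u) t.
Proof.
  intros [f1 [f2 [Hf F]]] [g1 [g2 [Hg G]]].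
  exists (fun u => f1 u + g1 u), (fun u => f2 u + g2 u).
  split; [apply is_derive2_near_plus; assumption | lra].
Qed.

Lemma strictly_convex_at_Derive_n (f : R -> R) :
  strictly_convex_at f t ->
  locally t (ex_derive f) /\ ex_derive_n f 2 t /\ 0 < Derive_n f 2 t.
Proof.
  intros [f1 [f2 [Hf F]]]. destruct (is_derive2_near_Derive_n t f f1 f2 Hf) as (H1 & H2 & H3).
  rewrite H3. auto.
Qed.

Lemma concave_at_plus (f g : R -> R) :
  concave_at f t -> concave_at g t -> concave_at (fun u => f u + g u) t.
Proof.
  intros [f1 [f2 [Hf F]]] [g1 [g2 [Hg G]]].
  exists (fun u => f1 u + g1 u), (fun u => f2 u + g2 u).
  split; [apply is_derive2_near_plus; assumption | lra].
Qed.

Lemma concave_at_affine (c m : R) : concave_at (fun u => c + m * u) t.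
Proof.
  exists (fun _ => 0 + m * 1), (fun _ => 0 + m * 0). split; [|lra].
  apply is_derive2_near_plus; [apply is_derive2_near_const|].
  apply is_derive2_near_scal, is_derive2_near_id.
Qed.

Lemma concave_at_scal (m : R) (f : R -> R) :
  0 <= m -> concave_at f t -> concave_at (fun u => m * f u) t.
Proof.
  intros Hm [f1 [f2 [Hf F]]]. exists (fun u => m * f1 u), (fun u => m * f2 u).
  split; [apply is_derive2_near_scal; exact Hf | nra].
Qed.

Lemma concave_at_sub_convex (c m : R) (f : R -> R) :
  0 <= m -> convex_at f t -> concave_at (fun u => c - m * f u) t.
Proof.
  intros Hm [f1 [f2 [Hf F]]].
  exists (fun u => 0 + - m * f1 u), (fun u => 0 + - m * f2 u). split; [|nra].
  apply (is_derive2_near_ext t (fun u => c + - m * f u)); [apply filter_forall; intros; ring|].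
  apply is_derive2_near_plus; [apply is_derive2_near_const | apply is_derive2_near_scal, Hf].
Qed.

Lemma concave_at_sqrt (g : R -> R) :
  concave_at g t -> locally t (fun u => 0 < g u) -> concave_at (fun u => sqrt (g u)) t.
Proof.
  intros [g1 [g2 [Hg G]]] Hpos. eexists; eexists. split.
  - exact (is_derive2_near_comp t _ _ _ (fun y => 0 < y) _ _ _ is_derive2_sqrt Hg Hpos).
  - cbv beta. assert (Ht := locally_singleton _ _ Hpos). cbv beta in Ht.
    assert (Hs := sqrt_lt_R0 _ Ht).
    assert (0 < / (4 * g t * sqrt (g t))) by (apply Rinv_0_lt_compat; nra).
    assert (0 < / (2 * sqrt (g t))) by (apply Rinv_0_lt_compat; nra).
    assert (0 <= g1 t * g1 t) by apply Rle_0_sqr. nra.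
Qed.

Lemma convex_at_div_sqrt (c : R) (g : R -> R) :
  0 <= c -> concave_at g t -> locally t (fun u => 0 < g u) ->
  convex_at (fun u => c / sqrt (g u)) t.
Proof.
  intros Hc [g1 [g2 [Hg G]]] Hpos. eexists; eexists. split.
  - apply (is_derive2_near_scal t c).
    exact (is_derive2_near_comp t _ _ _ (fun y => 0 < y) _ _ _ is_derive2_inv_sqrt Hg Hpos).
  - cbv beta. assert (Ht := locally_singleton _ _ Hpos). cbv beta in Ht.
    assert (Hs := sqrt_lt_R0 _ Ht).
    assert (0 < 3 / (4 * g t * g t * sqrt (g t)))
      by (apply Rdiv_lt_0_compat; [lra|]; apply Rmult_lt_0_compat; nra).
    assert (0 < / (2 * g t * sqrt (g t))) by (apply Rinv_0_lt_compat; nra).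
    assert (0 <= g1 t * g1 t) by apply Rle_0_sqr.
    apply Rmult_le_pos; [exact Hc | nra].
Qed.

Lemma strictly_convex_at_div_sqrt_id (c : R) :
  0 < c -> 0 < t -> strictly_convex_at (fun u => c / sqrt u) t.
Proof.
  intros Hc Ht. eexists; eexists. split.
  - apply (is_derive2_near_scal t c).
    exact (is_derive2_near_comp t _ _ _ (fun y => 0 < y) _ _ _ is_derive2_inv_sqrt
             (is_derive2_near_id t) (locally_gt0 t Ht)).
  - cbv beta. assert (Hs := sqrt_lt_R0 _ Ht).
    assert (0 < 3 / (4 * t * t * sqrt t))
      by (apply Rdiv_lt_0_compat; [lra|]; apply Rmult_lt_0_compat; nra).
    apply Rmult_lt_0_compat; [exact Hc | lra].
Qed.

Lemma concave_at_comp_convex (phi phi1 phi2 : R -> R) (Dom : R -> Prop) (f : R -> R) :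
  (forall y, Dom y -> is_derive phi y (phi1 y) /\ is_derive phi1 y (phi2 y)) ->
  convex_at f t -> locally t (fun u => Dom (f u)) ->
  phi1 (f t) <= 0 -> phi2 (f t) <= 0 ->
  concave_at (fun u => phi (f u)) t.
Proof.
  intros Hphi [f1 [f2 [Hf F]]] HDom H1 H2. eexists; eexists. split.
  - exact (is_derive2_near_comp t _ _ _ _ _ _ _ Hphi Hf HDom).
  - cbv beta. assert (0 <= f1 t * f1 t) by apply Rle_0_sqr. nra.
Qed.

End Convexity.

Lemma dist2_ge0 (P Q : R * R) : 0 <= dist2 P Q.
Proof. unfold dist2. apply Rplus_le_le_0_compat; apply Rle_0_sqr. Qed.

Lemma dist_ge0 (P Q : R * R) : 0 <= dist P Q.
Proof. apply sqrt_pos. Qed.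

Lemma dist_sq (P Q : R * R) : dist P Q * dist P Q = dist2 P Q.
Proof. apply sqrt_sqrt, dist2_ge0. Qed.

Lemma dist_sym (P Q : R * R) : dist P Q = dist Q P.
Proof. unfold dist, dist2, Rsqr. f_equal. ring. Qed.

Lemma dist_eq0 (P Q : R * R) : dist P Q = 0 -> P = Q.
Proof.
  intros H. assert (E := dist_sq P Q). rewrite H in E.
  destruct P as [p1 p2], Q as [q1 q2]. unfold dist2 in E; simpl in E.
  rewrite Rmult_0_r in E. apply eq_sym, Rplus_sqr_eq_0 in E.
  f_equal; lra.
Qed.

Lemma dist_triang (P Q S : R * R) : dist P S <= dist P Q + dist Q S.
Proof.
  assert (EPQ := dist_sq P Q). assert (EQS := dist_sq Q S). assert (EPS := dist_sq P S).
  assert (HPQ := dist_ge0 P Q). assert (HQS := dist_ge0 Q S). assert (HPS := dist_ge0 P S).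
  destruct P as [p1 p2], Q as [q1 q2], S as [s1 s2]. unfold dist2, Rsqr in *; simpl in *.
  set (d1 := dist (p1, p2) (q1, q2)) in *. set (d2 := dist (q1, q2) (s1, s2)) in *.
  set (d := dist (p1, p2) (s1, s2)) in *.
  assert (Hlag : ((p1 - q1) * (q1 - s1) + (p2 - q2) * (q2 - s2))
                 * ((p1 - q1) * (q1 - s1) + (p2 - q2) * (q2 - s2)) <= (d1 * d2) * (d1 * d2)).
  { replace ((d1 * d2) * (d1 * d2)) with ((d1 * d1) * (d2 * d2)) by ring.
    rewrite EPQ, EQS.
    assert (H := Rle_0_sqr ((p1 - q1) * (q2 - s2) - (p2 - q2) * (q1 - s1))).
    unfold Rsqr in H. lra. }
  assert (Hcs : (p1 - q1) * (q1 - s1) + (p2 - q2) * (q2 - s2) <= d1 * d2).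
  { assert (0 <= d1 * d2) by (apply Rmult_le_pos; assumption). nra. }
  nra.
Qed.

Lemma dist_scale (Q S : R * R) (m : R) : 0 <= m ->
  dist Q (fst Q + m * (fst S - fst Q), snd Q + m * (snd S - snd Q)) = m * dist Q S.
Proof.
  intros Hm. unfold dist, dist2, Rsqr; simpl.
  replace (_ + _) with ((m * m) * ((fst Q - fst S) * (fst Q - fst S)
                                  + (snd Q - snd S) * (snd Q - snd S))) by ring.
  rewrite sqrt_mult; [| apply Rle_0_sqr | apply Rplus_le_le_0_compat; apply Rle_0_sqr].
  rewrite sqrt_square; [reflexivity | exact Hm].
Qed.

Lemma crossing_ratio_bounds (c d : R) : c * d < 0 -> 0 <= c / (c - d) <= 1.
Proof.
  intros H. assert (Hcd : c - d <> 0) by nra.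
  assert (E : c / (c - d) * (c - d) = c) by (field; exact Hcd).
  set (m := c / (c - d)) in *.
  destruct (Rlt_dec 0 c); split; nra.
Qed.

(* The diagonals [PS] and [QT] cross at some [O], and
   [|PQ| + |PT| <= 2 |PO| + |QO| + |OT| <= 2 |PS| + |QT|]. *)
Lemma crossing_diagonals_ineq (P Q S T : R * R) :
  cross P S Q * cross P S T < 0 -> cross Q T P * cross Q T S < 0 ->
  dist P Q + dist P T - 2 * dist P S <= dist Q T.
Proof.
  intros H1 H2.
  assert (Hmu := crossing_ratio_bounds _ _ H1). assert (Htau := crossing_ratio_bounds _ _ H2).
  set (mu := cross P S Q / (cross P S Q - cross P S T)) in *.
  set (tau := cross Q T P / (cross Q T P - cross Q T S)) in *.
  set (O := (fst Q + mu * (fst T - fst Q), snd Q + mu * (snd T - snd Q))).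
  assert (HO : O = (fst P + tau * (fst S - fst P), snd P + tau * (snd S - snd P))).
  { assert (cross P S Q - cross P S T <> 0) by nra.
    assert (cross Q T P - cross Q T S <> 0) by nra.
    unfold O, mu, tau, cross in *.
    destruct P as [p1 p2], Q as [q1 q2], S as [s1 s2], T as [t1 t2]; simpl in *.
    f_equal; field; split; assumption. }
  assert (EQO : dist Q O = mu * dist Q T) by (apply dist_scale; lra).
  assert (EOT : dist O T = (1 - mu) * dist Q T).
  { rewrite dist_sym. unfold O.
    replace (fst Q + mu * (fst T - fst Q)) with (fst T + (1 - mu) * (fst Q - fst T)) by ring.
    replace (snd Q + mu * (snd T - snd Q)) with (snd T + (1 - mu) * (snd Q - snd T)) by ring.
    rewrite dist_scale by lra. apply f_equal, dist_sym. }
  assert (EPO : dist P O = tau * dist P S) by (rewrite HO; apply dist_scale; lra).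
  assert (T1 := dist_triang P O Q). assert (T2 := dist_triang P O T).
  rewrite (dist_sym O Q) in T1. assert (HPS := dist_ge0 P S).
  assert (tau * dist P S <= dist P S) by nra.
  lra.
Qed.

Lemma is_lim_seq_inv_S : is_lim_seq (fun n => / (INR n + 1)) 0.
Proof.
  assert (H : is_lim_seq (fun n => INR n + 1) p_infty).
  { eapply is_lim_seq_plus; [exact is_lim_seq_INR | apply is_lim_seq_const | reflexivity]. }
  exact (is_lim_seq_inv _ _ H ltac:(discriminate)).
Qed.

Lemma is_lim_seq_of_Rabs_bound (u : nat -> R) (l : R) :
  (forall n, Rabs (u n - l) <= / (INR n + 1)) -> is_lim_seq u l.
Proof.
  intros H.
  apply (is_lim_seq_le_le (fun n => l - / (INR n + 1)) u (fun n => l + / (INR n + 1))).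
  - intros n. specialize (H n). apply Rabs_le_between in H. lra.
  - replace (Finite l) with (Rbar_minus l 0) by (simpl; f_equal; ring).
    apply is_lim_seq_minus'; [apply is_lim_seq_const | exact is_lim_seq_inv_S].
  - replace (Finite l) with (Rbar_plus l 0) by (simpl; f_equal; ring).
    apply is_lim_seq_plus'; [apply is_lim_seq_const | exact is_lim_seq_inv_S].
Qed.

Definition config_lim (B : nat -> nat -> R * R) (A : nat -> R * R) : Prop :=
  forall i, is_lim_seq (fun n => fst (pt (B n) i)) (fst (pt A i)) /\
            is_lim_seq (fun n => snd (pt (B n) i)) (snd (pt A i)).

Lemma mod_5_representative (j : nat) : exists i, (1 <= i <= 5)%nat /\ (i mod 5 = j mod 5)%nat.
Proof.
  assert (Hj := Nat.mod_upper_bound j 5 ltac:(discriminate)).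
  destruct (j mod 5)%nat as [|[|[|[|[|m]]]]] eqn:E;
    [exists 5%nat | exists 1%nat | exists 2%nat | exists 3%nat | exists 4%nat | lia];
    split; (lia || reflexivity).
Qed.

Lemma Rabs_fst_le_dist (P Q : R * R) : Rabs (fst P - fst Q) <= dist P Q.
Proof.
  unfold dist, dist2. rewrite <- sqrt_Rsqr_abs. apply sqrt_le_1_alt.
  assert (H := Rle_0_sqr (snd P - snd Q)). lra.
Qed.

Lemma Rabs_snd_le_dist (P Q : R * R) : Rabs (snd P - snd Q) <= dist P Q.
Proof.
  unfold dist, dist2. rewrite <- sqrt_Rsqr_abs. apply sqrt_le_1_alt.
  assert (H := Rle_0_sqr (fst P - fst Q)). lra.
Qed.

Lemma in_closure_MC_seq (a : nat -> R) (A : nat -> R * R) :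
  in_closure_MC a A -> exists B, (forall n, in_MC a (B n)) /\ config_lim B A.
Proof.
  intros [_ HC].
  assert (Hn : forall n : nat, { B | in_MC a B /\
       forall i, (1 <= i <= 5)%nat -> dist (pt A i) (pt B i) < / (INR n + 1) }).
  { intros n. apply constructive_indefinite_description, HC.
    apply Rinv_0_lt_compat. assert (H := pos_INR n). lra. }
  exists (fun n => proj1_sig (Hn n)). split; [intros n; apply (proj2_sig (Hn n))|].
  intros j. destruct (mod_5_representative j) as [i [Hi Eij]].
  unfold pt. rewrite <- Eij.
  split; apply is_lim_seq_of_Rabs_bound; intros n;
    assert (Hd := proj2 (proj2_sig (Hn n)) i Hi); unfold pt in Hd; rewrite dist_sym in Hd.
  - eapply Rle_trans; [apply Rabs_fst_le_dist | left; exact Hd].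
  - eapply Rle_trans; [apply Rabs_snd_le_dist | left; exact Hd].
Qed.

Lemma config_lim_cross (B : nat -> nat -> R * R) (A : nat -> R * R) (i j l : nat) :
  config_lim B A ->
  is_lim_seq (fun n => cross (pt (B n) i) (pt (B n) j) (pt (B n) l))
    (cross (pt A i) (pt A j) (pt A l)).
Proof.
  intros H. destruct (H i) as [Xi Yi], (H j) as [Xj Yj], (H l) as [Xl Yl]. unfold cross.
  apply is_lim_seq_minus'; apply is_lim_seq_mult'; apply is_lim_seq_minus'; assumption.
Qed.

Lemma config_lim_dist (B : nat -> nat -> R * R) (A : nat -> R * R) (i j : nat) :
  config_lim B A ->
  is_lim_seq (fun n => dist (pt (B n) i) (pt (B n) j)) (dist (pt A i) (pt A j)).
Proof.
  intros H. destruct (H i) as [Xi Yi], (H j) as [Xj Yj]. unfold dist.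
  apply (is_lim_seq_continuous sqrt); [apply continuity_pt_sqrt, dist2_ge0|].
  unfold dist2, Rsqr.
  apply is_lim_seq_plus'; apply is_lim_seq_mult'; apply is_lim_seq_minus'; assumption.
Qed.

Lemma in_closure_MC_ge0 (a : nat -> R) (A : nat -> R * R) (F : (nat -> R * R) -> R) :
  (forall B, in_MC a B -> 0 <= F B) ->
  (forall B, config_lim B A -> is_lim_seq (fun n => F (B n)) (F A)) ->
  in_closure_MC a A -> 0 <= F A.
Proof.
  intros HF Hlim HA. destruct (in_closure_MC_seq a A HA) as [B [HB HBA]].
  exact (is_lim_seq_le (fun _ => 0) (fun n => F (B n)) 0 (F A)
           (fun n => HF _ (HB n)) (is_lim_seq_const 0) (Hlim B HBA)).
Qed.

Definition edge_side (A : nat -> R * R) (i j : nat) : R := cross (pt A i) (pt A (S i)) (pt A j).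

Definition off_edge (i j : nat) : Prop :=
  (1 <= i <= 5)%nat /\ (1 <= j <= 5)%nat /\
  (j mod 5 <> i mod 5)%nat /\ (j mod 5 <> (S i) mod 5)%nat.

Ltac solve_off_edge := unfold off_edge; simpl; lia.

Lemma in_MC_edge_sides_agree (a : nat -> R) (B : nat -> R * R) (i j i' j' : nat) :
  off_edge i j -> off_edge i' j' -> in_MC a B -> 0 < edge_side B i j * edge_side B i' j'.
Proof.
  intros (Hi & Hj & Hji & HjSi) (Hi' & Hj' & Hji' & HjSi') [_ [s [Hs HC]]].
  assert (H := HC i j Hi Hj Hji HjSi). assert (H' := HC i' j' Hi' Hj' Hji' HjSi').
  unfold edge_side. destruct Hs; subst s; nra.
Qed.

Lemma in_closure_MC_edge_sides_agree (a : nat -> R) (A : nat -> R * R) (i j i' j' : nat) :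
  off_edge i j -> off_edge i' j' -> in_closure_MC a A ->
  0 <= edge_side A i j * edge_side A i' j'.
Proof.
  intros Hij Hij'.
  apply (in_closure_MC_ge0 a A (fun B => edge_side B i j * edge_side B i' j')).
  - intros B HB. left. exact (in_MC_edge_sides_agree a B i j i' j' Hij Hij' HB).
  - intros B HBA. unfold edge_side. apply is_lim_seq_mult'; apply config_lim_cross; exact HBA.
Qed.

Lemma in_MC_opposite_sides (a : nat -> R) (B : nat -> R * R) (X : R) (i j i' j' : nat) :
  off_edge i j -> off_edge i' j' -> in_MC a B ->
  X = - (edge_side B i j * edge_side B i' j') -> X < 0.
Proof.
  intros Hij Hij' HB ->. assert (H := in_MC_edge_sides_agree a B i j i' j' Hij Hij' HB). lra.
Qed.

Lemma in_closure_MC_quad_ineq (a : nat -> R) (A : nat -> R * R) (p q r s : nat) :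
  (forall B, in_MC a B ->
     cross (pt B p) (pt B r) (pt B q) * cross (pt B p) (pt B r) (pt B s) < 0 /\
     cross (pt B q) (pt B s) (pt B p) * cross (pt B q) (pt B s) (pt B r) < 0) ->
  in_closure_MC a A ->
  dist (pt A p) (pt A q) + dist (pt A p) (pt A s) - 2 * dist (pt A p) (pt A r)
    <= dist (pt A q) (pt A s).
Proof.
  intros Hcross HA.
  enough (H : 0 <= dist (pt A q) (pt A s) - (dist (pt A p) (pt A q) + dist (pt A p) (pt A s)
                 - 2 * dist (pt A p) (pt A r))) by lra.
  apply (in_closure_MC_ge0 a A (fun B => dist (pt B q) (pt B s) - (dist (pt B p) (pt B q)
           + dist (pt B p) (pt B s) - 2 * dist (pt B p) (pt B r)))); [|intros B HBA|exact HA].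
  - intros B HB. destruct (Hcross B HB) as [H1 H2].
    assert (H := crossing_diagonals_ineq _ _ _ _ H1 H2). lra.
  - apply is_lim_seq_minus'; [apply config_lim_dist, HBA|].
    apply is_lim_seq_minus'; [apply is_lim_seq_plus'; apply config_lim_dist, HBA|].
    apply (is_lim_seq_scal_l _ 2 (dist (pt A p) (pt A r))), config_lim_dist, HBA.
Qed.

Ltac solve_opposite_sides :=
  solve_off_edge || assumption || (unfold edge_side, cross, pt; simpl; ring).

Lemma in_closure_MC_quad_1235 (a : nat -> R) (A : nat -> R * R) : in_closure_MC a A ->
  dist (pt A 1) (pt A 2) + dist (pt A 1) (pt A 5) - 2 * dist (pt A 1) (pt A 3)
    <= dist (pt A 2) (pt A 5).
Proof.
  apply in_closure_MC_quad_ineq. intros B HB.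
  split; [apply (in_MC_opposite_sides a B _ 1 3 5 3)
         |apply (in_MC_opposite_sides a B _ 5 2 2 5)];
    solve_opposite_sides.
Qed.

Lemma in_closure_MC_quad_3214 (a : nat -> R) (A : nat -> R * R) : in_closure_MC a A ->
  dist (pt A 3) (pt A 2) + dist (pt A 3) (pt A 4) - 2 * dist (pt A 3) (pt A 1)
    <= dist (pt A 2) (pt A 4).
Proof.
  apply in_closure_MC_quad_ineq. intros B HB.
  split; [apply (in_MC_opposite_sides a B _ 1 3 3 1)
         |apply (in_MC_opposite_sides a B _ 2 4 1 4)];
    solve_opposite_sides.
Qed.

Lemma in_closure_MC_quad_5431 (a : nat -> R) (A : nat -> R * R) : in_closure_MC a A ->
  dist (pt A 5) (pt A 4) + dist (pt A 5) (pt A 1) - 2 * dist (pt A 5) (pt A 3)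
    <= dist (pt A 4) (pt A 1).
Proof.
  apply in_closure_MC_quad_ineq. intros B HB.
  split; [apply (in_MC_opposite_sides a B _ 3 5 5 3)
         |apply (in_MC_opposite_sides a B _ 4 1 3 1)];
    solve_opposite_sides.
Qed.

Lemma in_closure_MC_quad_3254 (a : nat -> R) (A : nat -> R * R) : in_closure_MC a A ->
  dist (pt A 3) (pt A 2) + dist (pt A 3) (pt A 4) - 2 * dist (pt A 3) (pt A 5)
    <= dist (pt A 2) (pt A 4).
Proof.
  apply in_closure_MC_quad_ineq. intros B HB.
  split; [apply (in_MC_opposite_sides a B _ 2 5 3 5)
         |apply (in_MC_opposite_sides a B _ 2 4 4 2)];
    solve_opposite_sides.
Qed.

Lemma mult_eq_sqrt_mult (X Y G H : R) :
  0 <= X * Y -> X * X = G -> Y * Y = H -> X * Y = sqrt G * sqrt H.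
Proof.
  intros HXY <- <-. rewrite <- sqrt_mult by apply Rle_0_sqr.
  replace (X * X * (Y * Y)) with ((X * Y) * (X * Y)) by ring.
  rewrite sqrt_square; [reflexivity | exact HXY].
Qed.

(* The second derivative of p - sqrt (g h) when p'' = e c / (2 t^3), g'' = - e^2 / (2 t^3)
   and h'' = - c^2 / (2 t^3); it is a sum of squares over a positive denominator. *)
Lemma sqrt_product_second_derivative_bound (e c t g h g1 h1 : R) :
  0 < t -> 0 < g -> 0 < h ->
  0 <= e * c / (2 * t * t * t)
       + -1 * (- / (4 * (g * h) * sqrt (g * h)) * ((g1 * h + g * h1) * (g1 * h + g * h1))
               + / (2 * sqrt (g * h)) * (- (e * e) / (2 * t * t * t) * h + 2 * (g1 * h1)
                                        + g * (- (c * c) / (2 * t * t * t)))).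
Proof.
  intros Ht Hg Hh.
  assert (Psg := sqrt_lt_R0 g Hg). assert (Psh := sqrt_lt_R0 h Hh).
  assert (Sg := sqrt_sqrt g (Rlt_le _ _ Hg)). assert (Sh := sqrt_sqrt h (Rlt_le _ _ Hh)).
  rewrite sqrt_mult by lra.
  set (sg := sqrt g) in *. set (sh := sqrt h) in *. rewrite <- Sg, <- Sh.
  match goal with |- 0 <= ?X =>
    replace X with (((g1 * sh * sh - sg * sg * h1) * (g1 * sh * sh - sg * sg * h1) * (t * t * t)
       + sg * sg * sh * sh * ((e * sh + c * sg) * (e * sh + c * sg)))
       / (4 * sg * sg * sg * sh * sh * sh * (t * t * t))) by (field; repeat split; nra)
  end.
  apply Rmult_le_pos; [|left; apply Rinv_0_lt_compat; repeat apply Rmult_lt_0_compat; lra].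
  apply Rplus_le_le_0_compat.
  - apply Rmult_le_pos; [apply Rle_0_sqr | repeat apply Rmult_le_pos; lra].
  - apply Rmult_le_pos; [repeat apply Rmult_le_pos; lra | apply Rle_0_sqr].
Qed.

Lemma sqrt_div_mult_div (g h u : R) : 0 < u -> 0 <= g -> 0 <= h ->
  sqrt (g / u * (h / u)) = sqrt g * sqrt h / u.
Proof.
  intros Hu Hg Hh. assert (Sg := sqrt_sqrt g Hg). assert (Sh := sqrt_sqrt h Hh).
  replace (g / u * (h / u)) with ((sqrt g * sqrt h / u) * (sqrt g * sqrt h / u)).
  - apply sqrt_square. apply Rmult_le_pos; [apply Rmult_le_pos; apply sqrt_pos|].
    left. apply Rinv_0_lt_compat, Hu.
  - set (sg := sqrt g) in *. set (sh := sqrt h) in *. rewrite <- Sg, <- Sh. field. lra.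
Qed.

Lemma sum_sq_pos (p q : R) : p <> 0 \/ q <> 0 -> 0 < p * p + q * q.
Proof. intros [Hp | Hq]; [assert (0 < p * p) | assert (0 < q * q)]; nra. Qed.

Section DiagonalFormulas.

Variables (a : nat -> R) (k : R).

(* With A_3 at the origin write u = A_5, v = A_1, w = A_2, z = A_4, so |u| = b_4 = k,
   |v|^2 = x_2 = x, |w| = a_2, |z| = a_3.  Then dot_uv x = u.v, cross2_uv x = (u^v)^2, etc.,
   cross_uw x = |u^w|, and x1_of, x3_of, x5_of are |w - u|^2, |w - z|^2, |z - v|^2. *)
Definition dot_uv (x : R) : R := (k * k + x - a 5%nat * a 5%nat) / 2.
Definition dot_vw (x : R) : R := (x + a 2%nat * a 2%nat - a 1%nat * a 1%nat) / 2.
Definition dot_zu : R := (k * k + a 3%nat * a 3%nat - a 4%nat * a 4%nat) / 2.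
Definition cross2_uv (x : R) : R := k * k * x - dot_uv x * dot_uv x.
Definition cross2_vw (x : R) : R := a 2%nat * a 2%nat * x - dot_vw x * dot_vw x.
Definition cross2_zu : R := k * k * (a 3%nat * a 3%nat) - dot_zu * dot_zu.
Definition dot_uw (x : R) : R :=
  (dot_uv x * dot_vw x - sqrt (cross2_uv x) * sqrt (cross2_vw x)) / x.
Definition cross_uw (x : R) : R :=
  (dot_uv x * sqrt (cross2_vw x) + dot_vw x * sqrt (cross2_uv x)) / x.
Definition x1_of (x : R) : R := a 2%nat * a 2%nat + k * k - 2 * dot_uw x.
Definition x3_of (x : R) : R := a 2%nat * a 2%nat + a 3%nat * a 3%nat
  - 2 * (dot_zu * dot_uw x - sqrt cross2_zu * cross_uw x) / (k * k).
Definition x5_of (x : R) : R := a 3%nat * a 3%nat + x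
  - 2 * (dot_zu * dot_uv x - sqrt cross2_zu * sqrt (cross2_uv x)) / (k * k).

Lemma dot_uw_sq_add_cross_uw_sq (x : R) :
  0 < x -> 0 <= cross2_uv x -> 0 <= cross2_vw x ->
  dot_uw x * dot_uw x + cross_uw x * cross_uw x = k * k * (a 2%nat * a 2%nat).
Proof.
  intros Hx HG HH. unfold dot_uw, cross_uw.
  assert (SG := sqrt_sqrt _ HG). assert (SH := sqrt_sqrt _ HH).
  set (sg := sqrt (cross2_uv x)) in *. set (sh := sqrt (cross2_vw x)) in *.
  assert (EG : dot_uv x * dot_uv x + sg * sg = k * k * x) by (rewrite SG; unfold cross2_uv; ring).
  assert (EH : dot_vw x * dot_vw x + sh * sh = a 2%nat * a 2%nat * x)
    by (rewrite SH; unfold cross2_vw; ring).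
  apply Rmult_eq_reg_r with (x * x); [|nra].
  transitivity ((dot_uv x * dot_uv x + sg * sg) * (dot_vw x * dot_vw x + sh * sh)).
  - field. lra.
  - rewrite EG, EH. ring.
Qed.

Section Coordinates.

Variables u1 u2 v1 v2 w1 w2 z1 z2 x : R.
Hypothesis Hu : u1 * u1 + u2 * u2 = k * k.
Hypothesis Hv : v1 * v1 + v2 * v2 = x.
Hypothesis Hw : w1 * w1 + w2 * w2 = a 2%nat * a 2%nat.
Hypothesis Hz : z1 * z1 + z2 * z2 = a 3%nat * a 3%nat.
Hypothesis Hvw : (w1 - v1) * (w1 - v1) + (w2 - v2) * (w2 - v2) = a 1%nat * a 1%nat.
Hypothesis Hzu : (u1 - z1) * (u1 - z1) + (u2 - z2) * (u2 - z2) = a 4%nat * a 4%nat.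
Hypothesis Huv : (v1 - u1) * (v1 - u1) + (v2 - u2) * (v2 - u2) = a 5%nat * a 5%nat.

Let c_uv := u1 * v2 - u2 * v1.
Let c_vw := v1 * w2 - v2 * w1.
Let c_zu := z1 * u2 - z2 * u1.

Lemma dot_uv_eq : u1 * v1 + u2 * v2 = dot_uv x.
Proof. unfold dot_uv. lra. Qed.

Lemma dot_vw_eq : v1 * w1 + v2 * w2 = dot_vw x.
Proof. unfold dot_vw. lra. Qed.

Lemma dot_zu_eq : z1 * u1 + z2 * u2 = dot_zu.
Proof. unfold dot_zu. lra. Qed.

Lemma cross_uv_sq : c_uv * c_uv = cross2_uv x.
Proof. unfold cross2_uv. rewrite <- dot_uv_eq, <- Hv, <- Hu. unfold c_uv. ring. Qed.

Lemma cross_vw_sq : c_vw * c_vw = cross2_vw x.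
Proof. unfold cross2_vw. rewrite <- dot_vw_eq, <- Hv, <- Hw. unfold c_vw. ring. Qed.

Lemma cross_zu_sq : c_zu * c_zu = cross2_zu.
Proof. unfold cross2_zu. rewrite <- dot_zu_eq, <- Hz, <- Hu. unfold c_zu. ring. Qed.

Let c_uw := u1 * w2 - u2 * w1.
Let c_zw := z1 * w2 - z2 * w1.
Let c_zv := z1 * v2 - z2 * v1.

Hypothesis Hk : 0 < k.
Hypothesis Hx : 0 < x.
Hypothesis Huv_vw : 0 <= c_uv * c_vw.
Hypothesis Hzu_uv : 0 <= c_zu * c_uv.
Hypothesis Hzu_vw : 0 <= c_zu * c_vw.

Lemma dot_uw_eq : u1 * w1 + u2 * w2 = dot_uw x.
Proof.
  unfold dot_uw. rewrite <- (mult_eq_sqrt_mult _ _ _ _ Huv_vw cross_uv_sq cross_vw_sq).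
  rewrite <- dot_uv_eq, <- dot_vw_eq. apply Rmult_eq_reg_r with x; [|lra].
  unfold Rdiv. rewrite Rmult_assoc, Rinv_l by lra. rewrite <- Hv. unfold c_uv, c_vw. ring.
Qed.

Lemma x_mul_cross_uw : x * c_uw = dot_uv x * c_vw + c_uv * dot_vw x.
Proof. rewrite <- dot_uv_eq, <- dot_vw_eq, <- Hv. unfold c_uw, c_uv, c_vw. ring. Qed.

Lemma cross_zu_mul_cross_uw : c_zu * c_uw = sqrt cross2_zu * cross_uw x.
Proof.
  rewrite (Rmult_comm c_zu) in Hzu_uv, Hzu_vw.
  assert (S1 := mult_eq_sqrt_mult _ _ _ _ Hzu_uv cross_uv_sq cross_zu_sq).
  assert (S2 := mult_eq_sqrt_mult _ _ _ _ Hzu_vw cross_vw_sq cross_zu_sq).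
  apply Rmult_eq_reg_l with x; [|lra].
  replace (x * (c_zu * c_uw)) with (c_zu * (x * c_uw)) by ring. rewrite x_mul_cross_uw.
  transitivity (dot_uv x * (c_vw * c_zu) + dot_vw x * (c_uv * c_zu)); [ring|].
  rewrite S1, S2. unfold cross_uw. field. lra.
Qed.

Lemma x1_eq : (w1 - u1) * (w1 - u1) + (w2 - u2) * (w2 - u2) = x1_of x.
Proof. unfold x1_of. rewrite <- dot_uw_eq, <- Hw, <- Hu. ring. Qed.

Lemma x3_eq : (w1 - z1) * (w1 - z1) + (w2 - z2) * (w2 - z2) = x3_of x.
Proof.
  unfold x3_of. rewrite <- dot_uw_eq, <- cross_zu_mul_cross_uw, <- dot_zu_eq, <- Hw, <- Hz.
  replace (k * k) with (u1 * u1 + u2 * u2) by lra.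
  unfold c_zu, c_uw. field. nra.
Qed.

Lemma x5_eq : (z1 - v1) * (z1 - v1) + (z2 - v2) * (z2 - v2) = x5_of x.
Proof.
  rewrite (Rmult_comm c_zu) in Hzu_uv.
  unfold x5_of. rewrite (Rmult_comm (sqrt cross2_zu)).
  rewrite <- (mult_eq_sqrt_mult _ _ _ _ Hzu_uv cross_uv_sq cross_zu_sq), <- dot_zu_eq, <- dot_uv_eq.
  rewrite <- Hz, <- Hv. replace (k * k) with (u1 * u1 + u2 * u2) by lra.
  unfold c_uv, c_zu. field. nra.
Qed.

Hypothesis Huv_uw : 0 <= c_uv * c_uw.
Hypothesis Huv_zw : 0 <= c_uv * c_zw.
Hypothesis Huv_zv : 0 <= c_uv * c_zv.
Hypothesis HG : 0 < cross2_uv x.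
Hypothesis HH : 0 < cross2_vw x.

Lemma cross_uv_mul_cross_uw : c_uv * c_uw = sqrt (cross2_uv x) * cross_uw x.
Proof.
  assert (S := mult_eq_sqrt_mult _ _ _ _ Huv_vw cross_uv_sq cross_vw_sq).
  assert (SG := sqrt_sqrt _ (Rlt_le _ _ HG)).
  apply Rmult_eq_reg_l with x; [|lra].
  replace (x * (c_uv * c_uw)) with (c_uv * (x * c_uw)) by ring. rewrite x_mul_cross_uw.
  transitivity (dot_uv x * (c_uv * c_vw) + (c_uv * c_uv) * dot_vw x); [ring|].
  rewrite S, cross_uv_sq. unfold cross_uw.
  set (sg := sqrt (cross2_uv x)) in *. rewrite <- SG. field. lra.
Qed.

Lemma cross_uw_nonneg : 0 <= cross_uw x.
Proof.
  assert (Hs := sqrt_lt_R0 _ HG). assert (E := cross_uv_mul_cross_uw). nra.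
Qed.

Lemma cross_zw_sign : 0 <= dot_zu * cross_uw x + sqrt cross2_zu * dot_uw x.
Proof.
  rewrite (Rmult_comm c_zu) in Hzu_uv.
  assert (S := mult_eq_sqrt_mult _ _ _ _ Hzu_uv cross_uv_sq cross_zu_sq).
  assert (Hs := sqrt_lt_R0 _ HG).
  assert (E : k * k * c_zw = dot_zu * c_uw + c_zu * (u1 * w1 + u2 * w2)).
  { rewrite <- dot_zu_eq, <- Hu. unfold c_zw, c_uw, c_zu. ring. }
  assert (E' : c_uv * (k * k * c_zw)
               = sqrt (cross2_uv x) * (dot_zu * cross_uw x + sqrt cross2_zu * dot_uw x)).
  { rewrite E, dot_uw_eq.
    transitivity (dot_zu * (c_uv * c_uw) + (c_uv * c_zu) * dot_uw x); [ring|].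
    rewrite cross_uv_mul_cross_uw, S. ring. }
  assert (0 <= c_uv * (k * k * c_zw))
    by (replace (c_uv * (k * k * c_zw)) with ((k * k) * (c_uv * c_zw)) by ring; nra).
  nra.
Qed.

Lemma cross_zv_sign : 0 <= dot_zu * sqrt (cross2_uv x) + sqrt cross2_zu * dot_uv x.
Proof.
  rewrite (Rmult_comm c_zu) in Hzu_uv.
  assert (S := mult_eq_sqrt_mult _ _ _ _ Hzu_uv cross_uv_sq cross_zu_sq).
  assert (SG := sqrt_sqrt _ (Rlt_le _ _ HG)). assert (Hs := sqrt_lt_R0 _ HG).
  assert (E : k * k * c_zv = dot_zu * c_uv + c_zu * dot_uv x).
  { rewrite <- dot_zu_eq, <- dot_uv_eq, <- Hu. unfold c_zv, c_uv, c_zu. ring. }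
  assert (E' : c_uv * (k * k * c_zv)
               = sqrt (cross2_uv x) * (dot_zu * sqrt (cross2_uv x) + sqrt cross2_zu * dot_uv x)).
  { rewrite E. transitivity (dot_zu * (c_uv * c_uv) + (c_uv * c_zu) * dot_uv x); [ring|].
    rewrite cross_uv_sq, S. set (sg := sqrt (cross2_uv x)) in *. rewrite <- SG. ring. }
  assert (0 <= c_uv * (k * k * c_zv))
    by (replace (c_uv * (k * k * c_zv)) with ((k * k) * (c_uv * c_zv)) by ring; nra).
  nra.
Qed.

Lemma x1_pos : 0 < x1_of x.
Proof.
  rewrite <- x1_eq. apply sum_sq_pos.
  destruct (Req_dec w1 u1) as [E1|]; [right | left; lra]. intros Hw2.
  assert (c_vw = - c_uv) by (unfold c_vw, c_uv; rewrite E1; replace w2 with u2 by lra; ring).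
  assert (Z := cross_uv_sq). nra.
Qed.

Lemma x3_pos : 0 < x3_of x.
Proof.
  rewrite <- x3_eq. apply sum_sq_pos.
  destruct (Req_dec w1 z1) as [E1|]; [right | left; lra]. intros Hw2.
  assert (c_vw = - c_zv) by (unfold c_vw, c_zv; rewrite E1; replace w2 with z2 by lra; ring).
  assert (Z1 := cross_uv_sq). assert (Z2 := cross_vw_sq).
  assert (c_uv * c_vw = 0) by nra.
  assert ((c_uv * c_vw) * (c_uv * c_vw) = cross2_uv x * cross2_vw x)
    by (rewrite <- Z1, <- Z2; ring).
  nra.
Qed.

Lemma x5_pos : 0 < x5_of x.
Proof.
  rewrite <- x5_eq. apply sum_sq_pos.
  destruct (Req_dec z1 v1) as [E1|]; [right | left; lra]. intros Hz2.
  assert (c_zu = - c_uv) by (unfold c_zu, c_uv; rewrite E1; replace z2 with v2 by lra; ring).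
  assert (Z := cross_uv_sq). nra.
Qed.

End Coordinates.

Let e5 := k * k - a 5%nat * a 5%nat.
Let c1 := a 2%nat * a 2%nat - a 1%nat * a 1%nat.

Lemma is_derive2_near_cross2_uv (t : R) :
  is_derive2_near cross2_uv (fun u => k * k - (u + e5) / 2) (fun _ => - / 2) t.
Proof.
  unfold is_derive2_near. apply filter_forall. intros u. unfold cross2_uv, dot_uv, e5.
  split; (auto_derive; [exact I | field]).
Qed.

Lemma is_derive2_near_dot_uv_vw (t : R) : 0 < t ->
  is_derive2_near (fun u => dot_uv u * dot_vw u / u)
    (fun u => / 4 - e5 * c1 / (4 * u * u)) (fun u => e5 * c1 / (2 * u * u * u)) t.
Proof.
  intros Ht. unfold is_derive2_near. generalize (locally_gt0 t Ht). apply filter_imp. intros u Hu.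
  unfold dot_uv, dot_vw, e5, c1. split.
  - auto_derive; [lra|]. field. lra.
  - auto_derive; [repeat split; nra|]. field. lra.
Qed.

Lemma is_derive2_near_cross2_uv_div (t : R) : 0 < t ->
  is_derive2_near (fun u => cross2_uv u / u)
    (fun u => - / 4 + e5 * e5 / (4 * u * u)) (fun u => - (e5 * e5) / (2 * u * u * u)) t.
Proof.
  intros Ht. unfold is_derive2_near. generalize (locally_gt0 t Ht). apply filter_imp. intros u Hu.
  unfold cross2_uv, dot_uv, e5. split.
  - auto_derive; [lra|]. field. lra.
  - auto_derive; [repeat split; nra|]. field. lra.
Qed.

Lemma is_derive2_near_cross2_vw_div (t : R) : 0 < t ->
  is_derive2_near (fun u => cross2_vw u / u)
    (fun u => - / 4 + c1 * c1 / (4 * u * u)) (fun u => - (c1 * c1) / (2 * u * u * u)) t.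
Proof.
  intros Ht. unfold is_derive2_near. generalize (locally_gt0 t Ht). apply filter_imp. intros u Hu.
  unfold cross2_vw, dot_vw, c1. split.
  - auto_derive; [lra|]. field. lra.
  - auto_derive; [repeat split; nra|]. field. lra.
Qed.

Lemma convex_at_dot_uw (t : R) : 0 < t ->
  locally t (fun u => 0 < cross2_uv u /\ 0 < cross2_vw u) -> convex_at dot_uw t.
Proof.
  intros Ht Hpos.
  assert (Hpos' := filter_and _ _ (locally_gt0 t Ht) Hpos).
  assert (Hprod := is_derive2_near_mult t _ _ _ _ _ _
                     (is_derive2_near_cross2_uv_div t Ht) (is_derive2_near_cross2_vw_div t Ht)).
  assert (Hprod_pos : locally t (fun u => 0 < cross2_uv u / u * (cross2_vw u / u))).
  { generalize Hpos'. apply filter_imp. intros u [Hu [HG HH]].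
    apply Rmult_lt_0_compat; apply Rdiv_lt_0_compat; assumption. }
  eexists; eexists. split.
  - apply (is_derive2_near_ext t
      (fun u => dot_uv u * dot_vw u / u + -1 * sqrt (cross2_uv u / u * (cross2_vw u / u)))).
    + generalize Hpos'. apply filter_imp. intros u [Hu [HG HH]].
      unfold dot_uw. rewrite sqrt_div_mult_div by lra. field. lra.
    + apply is_derive2_near_plus; [exact (is_derive2_near_dot_uv_vw t Ht)|].
      apply is_derive2_near_scal.
      exact (is_derive2_near_comp t _ _ _ (fun y => 0 < y) _ _ _ is_derive2_sqrt Hprod Hprod_pos).
  - cbv beta. destruct (locally_singleton _ _ Hpos) as [HG HH].
    apply sqrt_product_second_derivative_bound; [exact Ht | |]; apply Rdiv_lt_0_compat; assumption.
Qed.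

Lemma concave_at_cross2_uv (t : R) : concave_at cross2_uv t.
Proof. eexists; eexists. split; [apply is_derive2_near_cross2_uv | cbv beta; lra]. Qed.

Lemma concave_at_x1 (t : R) : 0 < t ->
  locally t (fun u => 0 < cross2_uv u /\ 0 < cross2_vw u) -> concave_at x1_of t.
Proof.
  intros Ht Hpos. apply concave_at_sub_convex; [lra | exact (convex_at_dot_uw t Ht Hpos)].
Qed.

Lemma concave_at_x5 (t : R) : 0 < k -> locally t (fun u => 0 < cross2_uv u) -> concave_at x5_of t.
Proof.
  intros Hk Hpos.
  apply (concave_at_ext t (fun u => (a 3%nat * a 3%nat - dot_zu * e5 / (k * k))
     + (1 - dot_zu / (k * k)) * u + 2 * sqrt cross2_zu / (k * k) * sqrt (cross2_uv u))).
  { apply filter_forall. intros u. unfold x5_of, dot_uv, e5. field. lra. }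
  apply concave_at_plus; [apply concave_at_affine|].
  apply concave_at_scal.
  - apply Rmult_le_pos; [assert (H := sqrt_pos cross2_zu); lra|].
    left. apply Rinv_0_lt_compat. nra.
  - apply concave_at_sqrt; [apply concave_at_cross2_uv | exact Hpos].
Qed.

(* When u and w are parallel, they point in opposite directions: v lies strictly between them. *)
Lemma dot_uw_neg_of_cross_uw_zero (u : R) :
  0 < u -> 0 < cross2_uv u -> 0 < cross2_vw u -> 0 < a 2%nat ->
  cross_uw u = 0 -> dot_uw u < 0.
Proof.
  intros Hu HG HH Ha2 H0. unfold dot_uw. unfold cross_uw in H0.
  assert (SG := sqrt_sqrt _ (Rlt_le _ _ HG)). assert (SH := sqrt_sqrt _ (Rlt_le _ _ HH)).
  assert (PG := sqrt_lt_R0 _ HG). assert (PH := sqrt_lt_R0 _ HH).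
  set (sg := sqrt (cross2_uv u)) in *. set (sh := sqrt (cross2_vw u)) in *.
  assert (E0 : dot_uv u * sh + dot_vw u * sg = 0).
  { apply Rmult_eq_reg_r with (/ u); [|apply Rinv_neq_0_compat; lra]. rewrite Rmult_0_l. exact H0. }
  assert (EH : dot_vw u * dot_vw u + sh * sh = a 2%nat * a 2%nat * u)
    by (rewrite SH; unfold cross2_vw; ring).
  assert (K : sh * (dot_uv u * dot_vw u - sg * sh) = - sg * (a 2%nat * a 2%nat * u)).
  { rewrite <- EH.
    transitivity (dot_vw u * (dot_uv u * sh) - sg * (sh * sh)); [ring|].
    replace (dot_uv u * sh) with (- (dot_vw u * sg)) by lra. ring. }
  assert (0 < a 2%nat * a 2%nat * u) by (apply Rmult_lt_0_compat; nra).
  assert (dot_uv u * dot_vw u - sg * sh < 0) by nra.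
  apply Rmult_lt_reg_r with u; [exact Hu|]. unfold Rdiv. rewrite Rmult_assoc, Rinv_l by lra. lra.
Qed.

Let R2 := k * k * (a 2%nat * a 2%nat).

Definition x3_profile (w : R) : R := a 2%nat * a 2%nat + a 3%nat * a 3%nat
  - 2 * (dot_zu * w - sqrt cross2_zu * sqrt (R2 - w * w)) / (k * k).
Definition x3_profile' (w : R) : R :=
  -2 * (dot_zu + sqrt cross2_zu * w / sqrt (R2 - w * w)) / (k * k).
Definition x3_profile'' (w : R) : R :=
  -2 * sqrt cross2_zu * R2 / (k * k * (R2 - w * w) * sqrt (R2 - w * w)).

Lemma is_derive2_x3_profile (w : R) : 0 < k -> w * w < R2 ->
  is_derive x3_profile w (x3_profile' w) /\ is_derive x3_profile' w (x3_profile'' w).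
Proof.
  intros Hk Hw. assert (HR : 0 < R2 - w * w) by lra.
  assert (Hs := sqrt_lt_R0 _ HR). assert (Ss := sqrt_sqrt _ (Rlt_le _ _ HR)).
  unfold x3_profile, x3_profile', x3_profile''. split.
  - auto_derive; replace (R2 + - (w * w)) with (R2 - w * w) by ring; [repeat split; nra|].
    field. split; nra.
  - auto_derive; replace (R2 + - (w * w)) with (R2 - w * w) by ring; [repeat split; nra|].
    remember (sqrt (R2 - w * w)) as s. replace R2 with (s * s + w * w) by lra.
    field. repeat split; nra.
Qed.

Lemma R2_sub_dot_uw_sq (u : R) : 0 < u -> 0 < cross2_uv u -> 0 < cross2_vw u ->
  R2 - dot_uw u * dot_uw u = cross_uw u * cross_uw u.
Proof. intros Hu HG HH. unfold R2. rewrite <- (dot_uw_sq_add_cross_uw_sq u); lra. Qed.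

Lemma cross_uw_pos (u : R) :
  0 < u -> 0 < cross2_uv u -> 0 < cross2_vw u -> 0 < a 2%nat -> 0 < sqrt cross2_zu ->
  0 <= cross_uw u -> 0 <= dot_zu * cross_uw u + sqrt cross2_zu * dot_uw u -> 0 < cross_uw u.
Proof.
  intros Hu HG HH Ha2 HK Hc Hzw. destruct (Rle_lt_or_eq_dec _ _ Hc) as [|E]; [assumption|].
  assert (Hneg := dot_uw_neg_of_cross_uw_zero u Hu HG HH Ha2 (eq_sym E)).
  rewrite <- E in Hzw. nra.
Qed.

Lemma x3_profile_derivatives_nonpos (u : R) :
  0 < k -> 0 < u -> 0 < cross2_uv u -> 0 < cross2_vw u -> 0 < cross_uw u ->
  0 <= dot_zu * cross_uw u + sqrt cross2_zu * dot_uw u ->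
  x3_profile' (dot_uw u) <= 0 /\ x3_profile'' (dot_uw u) <= 0.
Proof.
  intros Hk Hu HG HH Hc Hzw.
  unfold x3_profile', x3_profile''. rewrite (R2_sub_dot_uw_sq u Hu HG HH), sqrt_square by lra.
  assert (HK := sqrt_pos cross2_zu).
  split.
  - replace (-2 * (dot_zu + sqrt cross2_zu * dot_uw u / cross_uw u) / (k * k))
      with (-2 * (dot_zu * cross_uw u + sqrt cross2_zu * dot_uw u) / (k * k * cross_uw u))
      by (field; split; lra).
    assert (0 < / (k * k * cross_uw u)) by (apply Rinv_0_lt_compat, Rmult_lt_0_compat; nra).
    unfold Rdiv. nra.
  - assert (0 <= R2) by (unfold R2; apply Rmult_le_pos; nra).
    assert (0 < / (k * k * (cross_uw u * cross_uw u) * cross_uw u))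
      by (apply Rinv_0_lt_compat, Rmult_lt_0_compat; [apply Rmult_lt_0_compat|]; nra).
    assert (0 <= sqrt cross2_zu * R2 * / (k * k * (cross_uw u * cross_uw u) * cross_uw u))
      by (apply Rmult_le_pos; [apply Rmult_le_pos|]; lra).
    unfold Rdiv. lra.
Qed.

Lemma concave_at_x3 (t : R) : 0 < k -> 0 < t -> 0 < a 2%nat ->
  locally t (fun u => 0 < cross2_uv u /\ 0 < cross2_vw u /\ 0 <= cross_uw u /\
    0 <= dot_zu * cross_uw u + sqrt cross2_zu * dot_uw u /\
    0 <= dot_zu * sqrt (cross2_uv u) + sqrt cross2_zu * dot_uv u) ->
  concave_at x3_of t.
Proof.
  intros Hk Ht Ha2 Hnear.
  assert (HGH : locally t (fun u => 0 < cross2_uv u /\ 0 < cross2_vw u)).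
  { generalize Hnear. apply filter_imp. intros u [HG [HH _]]. split; assumption. }
  assert (Hconv := convex_at_dot_uw t Ht HGH).
  destruct (Rle_lt_or_eq_dec 0 (sqrt cross2_zu) (sqrt_pos _)) as [HK | HK].
  - assert (Hcross : locally t (fun u => 0 < u /\ 0 < cross2_uv u /\ 0 < cross2_vw u /\
                                         0 < cross_uw u /\
                                         0 <= dot_zu * cross_uw u + sqrt cross2_zu * dot_uw u)).
    { generalize (filter_and _ _ (locally_gt0 t Ht) Hnear). apply filter_imp.
      intros u (Hu & HG & HH & Hc & Hzw & _). repeat split; try assumption.
      exact (cross_uw_pos u Hu HG HH Ha2 HK Hc Hzw). }
    apply (concave_at_ext t (fun u => x3_profile (dot_uw u))).
    + generalize Hcross. apply filter_imp. intros u (Hu & HG & HH & Hc & _).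
      unfold x3_profile, x3_of. rewrite (R2_sub_dot_uw_sq u Hu HG HH), sqrt_square by lra.
      reflexivity.
    + destruct (locally_singleton _ _ Hcross) as (_ & HG & HH & Hc & Hzw).
      destruct (x3_profile_derivatives_nonpos t Hk Ht HG HH Hc Hzw) as [H1 H2].
      apply (concave_at_comp_convex t _ _ _ (fun w => w * w < R2) _
               (fun w => is_derive2_x3_profile w Hk) Hconv); [|exact H1 | exact H2].
      generalize Hcross. apply filter_imp. intros u (Hu & HG' & HH' & Hc' & _).
      assert (E := R2_sub_dot_uw_sq u Hu HG' HH'). nra.
  - destruct (locally_singleton _ _ Hnear) as (HG & _ & _ & _ & Hzv).
    rewrite <- HK in Hzv. assert (Hsg := sqrt_lt_R0 _ HG).
    assert (HZ : 0 <= dot_zu) by nra.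
    apply (concave_at_ext t (fun u => a 2%nat * a 2%nat + a 3%nat * a 3%nat
                                      - 2 * dot_zu / (k * k) * dot_uw u)).
    + apply filter_forall. intros u. unfold x3_of. rewrite <- HK. field. lra.
    + apply concave_at_sub_convex; [|exact Hconv].
      unfold Rdiv. apply Rmult_le_pos; [lra|]. left. apply Rinv_0_lt_compat. nra.
Qed.

Definition nondegenerate (x : R) : Prop :=
  0 < x /\ 0 < cross2_uv x /\ 0 < cross2_vw x /\ 0 <= cross_uw x /\
  0 <= dot_zu * cross_uw x + sqrt cross2_zu * dot_uw x /\
  0 <= dot_zu * sqrt (cross2_uv x) + sqrt cross2_zu * dot_uv x /\
  0 < x1_of x /\ 0 < x3_of x /\ 0 < x5_of x.

Definition energy_of (q : nat -> R) (x : R) : R :=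
  q 2%nat * q 5%nat / sqrt (x1_of x) + q 1%nat * q 3%nat / sqrt x
  + q 2%nat * q 4%nat / sqrt (x3_of x) + q 3%nat * q 5%nat / k
  + q 1%nat * q 4%nat / sqrt (x5_of x).

Lemma strictly_convex_at_energy_of (q : nat -> R) (t : R) :
  0 < k -> 0 < a 2%nat -> (forall i, (1 <= i <= 5)%nat -> 0 < q i) ->
  locally t nondegenerate -> strictly_convex_at (energy_of q) t.
Proof.
  intros Hk Ha2 Hq Hnear.
  assert (Hqq : forall i j, (1 <= i <= 5)%nat -> (1 <= j <= 5)%nat -> 0 < q i * q j)
    by (intros i j Hi Hj; apply Rmult_lt_0_compat; auto).
  assert (Ht : 0 < t) by exact (proj1 (locally_singleton _ _ Hnear)).
  assert (Hnear' : forall P : R -> Prop, (forall u, nondegenerate u -> P u) -> locally t P)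
    by (intros P HP; exact (filter_imp _ _ HP Hnear)).
  unfold energy_of.
  apply strictly_convex_at_plus; [apply strictly_convex_at_plus; [apply strictly_convex_at_plus|]|].
  - apply convex_at_plus_strictly.
    + apply convex_at_div_sqrt; [left; apply Hqq; lia| |].
      * apply concave_at_x1; [exact Ht|]. apply Hnear'. intros u (? & ? & ? & _). split; assumption.
      * apply Hnear'. intros u (_ & _ & _ & _ & _ & _ & ? & _). assumption.
    + apply strictly_convex_at_div_sqrt_id; [apply Hqq; lia | exact Ht].
  - apply convex_at_div_sqrt; [left; apply Hqq; lia| |].
    + apply concave_at_x3; [exact Hk | exact Ht | exact Ha2|].
      apply Hnear'. intros u (_ & ? & ? & ? & ? & ? & _). repeat split; assumption.
    + apply Hnear'. intros u (_ & _ & _ & _ & _ & _ & _ & ? & _). assumption.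
  - apply convex_at_const.
  - apply convex_at_div_sqrt; [left; apply Hqq; lia| |].
    + apply concave_at_x5; [exact Hk|]. apply Hnear'. intros u (_ & ? & _). assumption.
    + apply Hnear'. intros u (_ & _ & _ & _ & _ & _ & _ & _ & ?). assumption.
Qed.

End DiagonalFormulas.

Definition rel_x (A : nat -> R * R) (i : nat) : R := fst (A i) - fst (A 3%nat).
Definition rel_y (A : nat -> R * R) (i : nat) : R := snd (A i) - snd (A 3%nat).

Lemma dist_sq_eq (P Q : R * R) (r : R) : dist P Q = r -> dist2 P Q = r * r.
Proof. intros <-. symmetry. apply dist_sq. Qed.

Lemma has_sides_rel (a : nat -> R) (A : nat -> R * R) : has_sides a A ->
  rel_x A 2 * rel_x A 2 + rel_y A 2 * rel_y A 2 = a 2%nat * a 2%nat /\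
  rel_x A 4 * rel_x A 4 + rel_y A 4 * rel_y A 4 = a 3%nat * a 3%nat /\
  (rel_x A 2 - rel_x A 1) * (rel_x A 2 - rel_x A 1)
    + (rel_y A 2 - rel_y A 1) * (rel_y A 2 - rel_y A 1) = a 1%nat * a 1%nat /\
  (rel_x A 0 - rel_x A 4) * (rel_x A 0 - rel_x A 4)
    + (rel_y A 0 - rel_y A 4) * (rel_y A 0 - rel_y A 4) = a 4%nat * a 4%nat /\
  (rel_x A 1 - rel_x A 0) * (rel_x A 1 - rel_x A 0)
    + (rel_y A 1 - rel_y A 0) * (rel_y A 1 - rel_y A 0) = a 5%nat * a 5%nat.
Proof.
  intros Hs.
  assert (S1 := dist_sq_eq _ _ _ (Hs 1%nat ltac:(lia))).
  assert (S2 := dist_sq_eq _ _ _ (Hs 2%nat ltac:(lia))).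
  assert (S3 := dist_sq_eq _ _ _ (Hs 3%nat ltac:(lia))).
  assert (S4 := dist_sq_eq _ _ _ (Hs 4%nat ltac:(lia))).
  assert (S5 := dist_sq_eq _ _ _ (Hs 5%nat ltac:(lia))).
  unfold rel_x, rel_y, pt, dist2, Rsqr in *. simpl in *.
  repeat split; lra.
Qed.

Lemma b_sq_rel (A : nat -> R * R) :
  rel_x A 0 * rel_x A 0 + rel_y A 0 * rel_y A 0 = b A 4 * b A 4 /\
  rel_x A 1 * rel_x A 1 + rel_y A 1 * rel_y A 1 = x A 2 /\
  b A 1 * b A 1 = (rel_x A 2 - rel_x A 0) * (rel_x A 2 - rel_x A 0)
                  + (rel_y A 2 - rel_y A 0) * (rel_y A 2 - rel_y A 0) /\
  b A 3 * b A 3 = (rel_x A 2 - rel_x A 4) * (rel_x A 2 - rel_x A 4)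
                  + (rel_y A 2 - rel_y A 4) * (rel_y A 2 - rel_y A 4) /\
  b A 5 * b A 5 = (rel_x A 4 - rel_x A 1) * (rel_x A 4 - rel_x A 1)
                  + (rel_y A 4 - rel_y A 1) * (rel_y A 4 - rel_y A 1).
Proof.
  unfold x, Rsqr, b. rewrite !dist_sq.
  unfold rel_x, rel_y, pt, dist2, Rsqr. simpl. repeat split; ring.
Qed.

Lemma edge_side_rel (A : nat -> R * R) :
  edge_side A 5 3 = rel_x A 0 * rel_y A 1 - rel_y A 0 * rel_x A 1 /\
  edge_side A 1 3 = rel_x A 1 * rel_y A 2 - rel_y A 1 * rel_x A 2 /\
  edge_side A 3 5 = rel_x A 4 * rel_y A 0 - rel_y A 4 * rel_x A 0 /\
  edge_side A 2 5 = rel_x A 0 * rel_y A 2 - rel_y A 0 * rel_x A 2 /\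
  edge_side A 2 4 = rel_x A 4 * rel_y A 2 - rel_y A 4 * rel_x A 2 /\
  edge_side A 3 1 = rel_x A 4 * rel_y A 1 - rel_y A 4 * rel_x A 1.
Proof. unfold edge_side, cross, rel_x, rel_y, pt. simpl. repeat split; ring. Qed.

Lemma in_closure_MC_rel_signs (a : nat -> R) (A : nat -> R * R) : in_closure_MC a A ->
  let u1 := rel_x A 0 in let u2 := rel_y A 0 in let v1 := rel_x A 1 in let v2 := rel_y A 1 in
  let w1 := rel_x A 2 in let w2 := rel_y A 2 in let z1 := rel_x A 4 in let z2 := rel_y A 4 in
  0 <= (u1 * v2 - u2 * v1) * (v1 * w2 - v2 * w1) /\
  0 <= (z1 * u2 - z2 * u1) * (u1 * v2 - u2 * v1) /\
  0 <= (z1 * u2 - z2 * u1) * (v1 * w2 - v2 * w1) /\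
  0 <= (u1 * v2 - u2 * v1) * (u1 * w2 - u2 * w1) /\
  0 <= (u1 * v2 - u2 * v1) * (z1 * w2 - z2 * w1) /\
  0 <= (u1 * v2 - u2 * v1) * (z1 * v2 - z2 * v1).
Proof.
  intros HA. destruct (edge_side_rel A) as (E53 & E13 & E35 & E25 & E24 & E31).
  cbv zeta. rewrite <- E53, <- E13, <- E35, <- E25, <- E24, <- E31.
  repeat split; apply (in_closure_MC_edge_sides_agree a); (solve_off_edge || exact HA).
Qed.

Lemma b_ge0 (A : nat -> R * R) (i : nat) : 0 <= b A i.
Proof. apply dist_ge0. Qed.

Lemma sqrt_of_sq (r s : R) : 0 <= r -> r * r = s -> r = sqrt s.
Proof. intros Hr <-. rewrite sqrt_square; [reflexivity | exact Hr]. Qed.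

Lemma b2_eq_sqrt_x2 (A : nat -> R * R) : b A 2 = sqrt (x A 2).
Proof. unfold x. rewrite sqrt_Rsqr; [reflexivity | apply b_ge0]. Qed.

Section Slice.

Variables (a : nat -> R) (k : R) (A : nat -> R * R).
Hypothesis HA : in_slice a k A.

Lemma in_slice_cross2_nonneg : 0 <= cross2_uv a k (x A 2) /\ 0 <= cross2_vw a (x A 2).
Proof.
  destruct HA as [[Hs _] Hb4].
  destruct (has_sides_rel a A Hs) as (Hw & Hz & Hvw & Hzu & Huv).
  destruct (b_sq_rel A) as (Hu & Hv & _). rewrite Hb4 in Hu.
  rewrite <- (cross_uv_sq a k _ _ _ _ (x A 2) Hu Hv Huv).
  rewrite <- (cross_vw_sq a _ _ _ _ (x A 2) Hv Hw Hvw).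
  split; apply Rle_0_sqr.
Qed.

Hypothesis Hk : 0 < k.
Hypothesis Hx : 0 < x A 2.

Lemma in_slice_energy (q : nat -> R) : energy q A = energy_of a k q (x A 2).
Proof.
  destruct HA as [HC Hb4].
  destruct (has_sides_rel a A (proj1 HC)) as (Hw & Hz & Hvw & Hzu & Huv).
  destruct (b_sq_rel A) as (Hu & Hv & E1 & E3 & E5). rewrite Hb4 in Hu.
  destruct (in_closure_MC_rel_signs a A HC) as (S1 & S2 & S3 & _).
  assert (X1 : b A 1 * b A 1 = x1_of a k (x A 2)) by (rewrite E1; eapply x1_eq; eassumption).
  assert (X3 : b A 3 * b A 3 = x3_of a k (x A 2)) by (rewrite E3; eapply x3_eq; eassumption).
  assert (X5 : b A 5 * b A 5 = x5_of a k (x A 2)) by (rewrite E5; eapply x5_eq; eassumption).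
  unfold energy, energy_of.
  rewrite (sqrt_of_sq _ _ (b_ge0 A 1) X1), (sqrt_of_sq _ _ (b_ge0 A 3) X3),
          (sqrt_of_sq _ _ (b_ge0 A 5) X5), b2_eq_sqrt_x2, Hb4.
  reflexivity.
Qed.

Lemma in_slice_nondegenerate :
  0 < cross2_uv a k (x A 2) -> 0 < cross2_vw a (x A 2) -> nondegenerate a k (x A 2).
Proof.
  intros HG HH. destruct HA as [HC Hb4].
  destruct (has_sides_rel a A (proj1 HC)) as (Hw & Hz & Hvw & Hzu & Huv).
  destruct (b_sq_rel A) as (Hu & Hv & _). rewrite Hb4 in Hu.
  destruct (in_closure_MC_rel_signs a A HC) as (S1 & S2 & S3 & S4 & S5 & S6).
  repeat split; try assumption.
  - eapply cross_uw_nonneg; eassumption.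
  - eapply cross_zw_sign; eassumption.
  - eapply cross_zv_sign; eassumption.
  - eapply x1_pos; eassumption.
  - eapply x3_pos; eassumption.
  - eapply x5_pos; eassumption.
Qed.

End Slice.

(* The energy on the slice when A_1 = A_3 (x_2 = 0) or A_3 = A_5 (b_4 = 0); the terms
   [/ 0] are the junk value of [energy] itself. *)
Definition energy_x2_zero (a q : nat -> R) (k : R) : R :=
  q 2%nat * q 5%nat / (a 1%nat + a 5%nat) + q 1%nat * q 3%nat / 0
  + q 2%nat * q 4%nat / (a 2%nat + a 3%nat) + q 3%nat * q 5%nat / k + q 1%nat * q 4%nat / a 3%nat.
Definition energy_b4_zero (a q : nat -> R) : R :=
  q 2%nat * q 5%nat / a 2%nat + q 1%nat * q 3%nat / a 5%nat
  + q 2%nat * q 4%nat / (a 2%nat + a 3%nat) + q 3%nat * q 5%nat / 0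
  + q 1%nat * q 4%nat / (a 4%nat + a 5%nat).

Lemma has_sides_dist (a : nat -> R) (A : nat -> R * R) : has_sides a A ->
  dist (A 1%nat) (A 2%nat) = a 1%nat /\ dist (A 2%nat) (A 3%nat) = a 2%nat /\
  dist (A 3%nat) (A 4%nat) = a 3%nat /\ dist (A 4%nat) (A 0%nat) = a 4%nat /\
  dist (A 0%nat) (A 1%nat) = a 5%nat.
Proof.
  intros Hs. unfold has_sides, pt in Hs.
  repeat split; [apply (Hs 1%nat) | apply (Hs 2%nat) | apply (Hs 3%nat) | apply (Hs 4%nat)
                | apply (Hs 5%nat)]; lia.
Qed.

Lemma b_dist (A : nat -> R * R) :
  b A 1 = dist (A 0%nat) (A 2%nat) /\ b A 2 = dist (A 1%nat) (A 3%nat) /\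
  b A 3 = dist (A 2%nat) (A 4%nat) /\ b A 4 = dist (A 3%nat) (A 0%nat) /\
  b A 5 = dist (A 4%nat) (A 1%nat).
Proof. repeat split. Qed.

Lemma in_slice_x2_zero_energy (a q : nat -> R) (k : R) (A : nat -> R * R) :
  in_slice a k A -> x A 2 = 0 -> energy q A = energy_x2_zero a q k.
Proof.
  intros [HC Hb4] Hx.
  destruct (has_sides_dist a A (proj1 HC)) as (S1 & S2 & S3 & S4 & S5).
  destruct (b_dist A) as (B1 & B2 & B3 & _ & B5).
  assert (Q1 := in_closure_MC_quad_1235 a A HC). assert (Q2 := in_closure_MC_quad_3214 a A HC).
  unfold pt in Q1, Q2. simpl in Q1, Q2.
  assert (Hb2 : b A 2 = 0) by (unfold x, Rsqr in Hx; assert (H := b_ge0 A 2); nra).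
  assert (E13 : A 1%nat = A 3%nat) by (apply dist_eq0; rewrite <- B2; exact Hb2).
  assert (Hb1 : b A 1 = a 1%nat + a 5%nat).
  { rewrite (dist_sym (A 1%nat) (A 0%nat)), (dist_sym (A 2%nat) (A 0%nat)), <- B2, Hb2 in Q1.
    assert (T := dist_triang (A 0%nat) (A 1%nat) (A 2%nat)). lra. }
  assert (Hb3 : b A 3 = a 2%nat + a 3%nat).
  { rewrite (dist_sym (A 3%nat) (A 2%nat)), (dist_sym (A 3%nat) (A 1%nat)), <- B2, Hb2 in Q2.
    assert (T := dist_triang (A 2%nat) (A 3%nat) (A 4%nat)). lra. }
  assert (Hb5 : b A 5 = a 3%nat) by (rewrite B5, E13, dist_sym; exact S3).
  unfold energy, energy_x2_zero. rewrite Hb1, Hb2, Hb3, Hb4, Hb5. reflexivity.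
Qed.

Lemma in_slice_b4_zero_A3 (a : nat -> R) (A : nat -> R * R) :
  in_slice a 0 A -> A 3%nat = A 0%nat.
Proof. intros [_ Hb4]. apply dist_eq0. exact Hb4. Qed.

Lemma in_slice_b4_zero_x2 (a : nat -> R) (A : nat -> R * R) :
  in_slice a 0 A -> x A 2 = a 5%nat * a 5%nat.
Proof.
  intros HA. assert (E30 := in_slice_b4_zero_A3 a A HA).
  destruct (has_sides_dist a A (proj1 (proj1 HA))) as (_ & _ & _ & _ & S5).
  unfold x, Rsqr. rewrite (proj1 (proj2 (b_dist A))), E30, dist_sym, S5. reflexivity.
Qed.

Lemma in_slice_b4_zero_energy (a q : nat -> R) (A : nat -> R * R) :
  in_slice a 0 A -> energy q A = energy_b4_zero a q.
Proof.
  intros HA. assert (E30 := in_slice_b4_zero_A3 a A HA). destruct HA as [HC Hb4].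
  destruct (has_sides_dist a A (proj1 HC)) as (S1 & S2 & S3 & S4 & S5).
  destruct (b_dist A) as (B1 & B2 & B3 & B4 & B5).
  assert (Q3 := in_closure_MC_quad_5431 a A HC). assert (Q4 := in_closure_MC_quad_3254 a A HC).
  unfold pt in Q3, Q4. simpl in Q3, Q4.
  assert (D30 : dist (A 3%nat) (A 0%nat) = 0) by (rewrite <- B4; exact Hb4).
  assert (Hb1 : b A 1 = a 2%nat) by (rewrite B1, <- E30, dist_sym; exact S2).
  assert (Hb2 : b A 2 = a 5%nat) by (rewrite B2, E30, dist_sym; exact S5).
  assert (Hb3 : b A 3 = a 2%nat + a 3%nat).
  { rewrite (dist_sym (A 3%nat) (A 2%nat)), D30 in Q4.
    assert (T := dist_triang (A 2%nat) (A 3%nat) (A 4%nat)). lra. }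
  assert (Hb5 : b A 5 = a 4%nat + a 5%nat).
  { rewrite (dist_sym (A 0%nat) (A 4%nat)), (dist_sym (A 0%nat) (A 3%nat)), D30 in Q3.
    assert (T := dist_triang (A 4%nat) (A 0%nat) (A 1%nat)). lra. }
  unfold energy, energy_b4_zero. rewrite Hb1, Hb2, Hb3, Hb4, Hb5. reflexivity.
Qed.

Definition slice_energy (a q : nat -> R) (k u : R) : R :=
  if Rlt_dec 0 k then (if Rlt_dec 0 u then energy_of a k q u else energy_x2_zero a q k)
  else energy_b4_zero a q.

Lemma slice_energy_spec (a q : nat -> R) (k : R) (A : nat -> R * R) :
  in_slice a k A -> energy q A = slice_energy a q k (x A 2).
Proof.
  intros HA. unfold slice_energy. destruct (Rlt_dec 0 k) as [Hk | Hk].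
  - destruct (Rlt_dec 0 (x A 2)) as [Hx | Hx].
    + exact (in_slice_energy a k A HA Hk Hx q).
    + apply (in_slice_x2_zero_energy a q k A HA).
      assert (H := Rle_0_sqr (b A 2)). unfold x in Hx |- *. lra.
  - assert (k = 0) by (destruct HA as [_ <-]; assert (H := b_ge0 A 4); lra).
    subst k. exact (in_slice_b4_zero_energy a q A HA).
Qed.

Definition slice_image (a : nat -> R) (k s : R) : Prop := exists A, in_slice a k A /\ s = x A 2.

Lemma slice_image_nondegenerate (a : nat -> R) (k t : R) :
  0 < k -> locally t (slice_image a k) -> nondegenerate a k t.
Proof.
  intros Hk Himg. apply locally_Rabs in Himg. destruct Himg as [r [Hr Himg]].
  set (h := r / 2).
  assert (Hslice : forall s, Rabs (s - t) <= h ->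
            exists A, in_slice a k A /\ s = x A 2 /\ 0 <= s /\
                      0 <= cross2_uv a k s /\ 0 <= cross2_vw a s).
  { intros s Hs. destruct (Himg s ltac:(unfold h in Hs; lra)) as [A [HA ->]].
    exists A. destruct (in_slice_cross2_nonneg a k A HA) as [HG HH].
    refine (conj HA (conj eq_refl (conj (Rle_0_sqr _) (conj HG HH)))). }
  destruct (Hslice (t - h)) as (_ & _ & _ & Xm & Gm & Hm).
  { replace (t - h - t) with (- h) by ring. rewrite Rabs_Ropp, Rabs_pos_eq; unfold h; lra. }
  destruct (Hslice (t + h)) as (_ & _ & _ & Xp & Gp & Hp).
  { replace (t + h - t) with h by ring. rewrite Rabs_pos_eq; unfold h; lra. }
  destruct (Hslice t) as (A & HA & -> & _).
  { rewrite Rminus_diag, Rabs_R0. unfold h. lra. }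
  (* cross2_uv and cross2_vw are quadratics with leading coefficient -1/4 *)
  assert (HG : 0 < cross2_uv a k (x A 2)).
  { assert (cross2_uv a k (x A 2 + h) + cross2_uv a k (x A 2 - h) - 2 * cross2_uv a k (x A 2)
            = - (h * h) / 2) by (unfold cross2_uv, dot_uv; field).
    assert (0 < h) by (unfold h; lra). nra. }
  assert (HH : 0 < cross2_vw a (x A 2)).
  { assert (cross2_vw a (x A 2 + h) + cross2_vw a (x A 2 - h) - 2 * cross2_vw a (x A 2)
            = - (h * h) / 2) by (unfold cross2_vw, dot_vw; field).
    assert (0 < h) by (unfold h; lra). nra. }
  apply (in_slice_nondegenerate a k A HA Hk); [unfold h in *; lra | exact HG | exact HH].
Qed.

Lemma slice_image_b4_pos (a : nat -> R) (k t : R) : locally t (slice_image a k) -> 0 < k.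
Proof.
  intros Himg. apply locally_Rabs in Himg. destruct Himg as [d [Hd Himg]].
  destruct (Himg t) as [A0 [HA0 E0]]; [rewrite Rminus_diag, Rabs_R0; lra|].
  destruct (Himg (t + d / 2)) as [A1 [HA1 E1]].
  { replace (t + d / 2 - t) with (d / 2) by ring. rewrite Rabs_pos_eq; lra. }
  destruct (Rlt_dec 0 k) as [Hk|Hk]; [exact Hk|].
  assert (k = 0) by (destruct HA0 as [_ <-]; assert (H := b_ge0 A0 4); lra). subst k.
  assert (X0 := in_slice_b4_zero_x2 a A0 HA0). assert (X1 := in_slice_b4_zero_x2 a A1 HA1).
  lra.
Qed.

Theorem lemma7 (a q : nat -> R) (k : R) :
  (forall i, (1 <= i <= 5)%nat -> 0 < a i) ->
  (forall i, (1 <= i <= 5)%nat -> 0 < q i) ->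
  exists f : R -> R,
    (forall A, in_slice a k A -> energy q A = f (x A 2)) /\
    (forall t,
       interior_pt (fun s => exists A, in_slice a k A /\ s = x A 2) t ->
       (exists d, 0 < d /\ forall u, Rabs (u - t) < d -> ex_derive f u) /\
       ex_derive_n f 2 t /\ 0 < Derive_n f 2 t).
Proof.
  intros Ha Hq. exists (slice_energy a q k). split.
  - intros A HA. exact (slice_energy_spec a q k A HA).
  - intros t Hint. apply locally_Rabs in Hint. change (locally t (slice_image a k)) in Hint.
    assert (Hk := slice_image_b4_pos a k t Hint).
    assert (Hnd : locally t (nondegenerate a k)).
    { generalize (locally_locally _ _ Hint). apply filter_imp. intros u.
      exact (slice_image_nondegenerate a k u Hk). }
    assert (Heq : locally t (fun u => energy_of a k q u = slice_energy a q k u)).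
    { generalize Hnd. apply filter_imp. intros u [Hu _]. unfold slice_energy.
      destruct (Rlt_dec 0 k); [|lra]. destruct (Rlt_dec 0 u); [reflexivity | lra]. }
    assert (Hconv := strictly_convex_at_energy_of a k q t Hk (Ha 2%nat ltac:(lia)) Hq Hnd).
    destruct (strictly_convex_at_Derive_n t _ (strictly_convex_at_ext t _ _ Heq Hconv))
      as (Hder & Hder2 & Hpos).
    split; [apply locally_Rabs, Hder | split; assumption].
Qed.
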